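(* Let $\langle D,\epsilon,\delta\rangle$ be a comonad on $\mathcal C$ and $\lambda\colon TD\Rightarrow DT$ a distributive law of the monad $\mathcal T$ over the comonad $\langle D,\epsilon,\delta\rangle$. (a) The following are equivalent: 1. $Dq_X\circ\lambda_X\circ l_{DX}=Dq_X\circ\lambda_X\circ r_{DX}$ for all $X$ ($\lambda$ preserves $\mathcal E$). 2. There is a distributive law $\lambda'\colon T'D\Rightarrow DT'$ of $\mathcal T'$ over the comonad $\langle D,\epsilon,\delta\rangle$ such that $q$ is a morphism of distributive laws from $\lambda$ to $\lambda'$; this $\lambda'$ is then unique. (b) If $\lambda$ preserves $\mathcal E$ and $\mathcal K$ is presented by $\Sigma$ and $\mathcal E$ via a monad isomorphism $i\colon T'\Rightarrow K$, then there is a unique distributive law $\kappa$ of $\mathcal K$ over the comonad $\langle D,\epsilon,\delta\rangle$ such that $i\circ q\colon\lambda\Rightarrow\kappa$ is a morphism of distributive laws.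
   Context: Let $\mathcal C$ be a category and $\Sigma$ an endofunctor on $\mathcal C$. Let $\mathcal T=\langle T,\eta,\mu\rangle$ be the free monad over $\Sigma$. Let $\mathcal E=\langle E,l,r\rangle$ be $\mathcal T$-equations: $E$ an endofunctor, $l,r\colon E\Rightarrow T$ natural. Standing assumptions: 1. $\mathrm{Alg}(\mathcal T)$ has coequalizers. 2. The forgetful $U$ and $TU$ send regular epis to epis. 3. $EU$ sends regular epis to epis. The quotient monad $\mathcal T'=\langle T',\eta',\mu'\rangle$ is the monad induced by the left adjoint $X\mapsto\langle TX/\mathcal E,\mu_X/\mathcal E\rangle$ of the forgetful functor from the category of $\mathcal T$-algebras satisfying $\mathcal E$ (those with $\alpha\circ l_A=\alpha\circ r_A$) to $\mathcal C$. Here $\langle TX/\mathcal E,\mu_X/\mathcal E\rangle$ is the codomain of the coequalizer $s$ in $\mathrm{Alg}(\mathcal T)$ of $\mu_X\circ\mu_{TX}\circ Tl_{TX}$ and $\mu_X\circ\mu_{TX}\circ Tr_{TX}$. We set $q_X=Us_{\langle TX,\mu_X\rangle}\colon TX\to T'X$, a monad morphism. A monad $\mathcal K$ is presented by $\Sigma$ and $\mathcal E$ if there is a monad isomorphism $T'\Rightarrow K$. A distributive law of a monad $\langle K,\theta,\nu\rangle$ over a comonad $\langle D,\epsilon,\delta\rangle$ is a natural $\kappa\colon KD\Rightarrow DK$ satisfying all of: - $\kappa\circ\theta_D=D\theta$; - $\kappa\circ\nu_D=D\nu\circ\kappa_K\circ K\kappa$; - $\epsilon_K\circ\kappa=K\epsilon$;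 - $\delta_K\circ\kappa=D\kappa\circ\kappa_D\circ K\delta$. A morphism of distributive laws $\tau\colon\lambda\Rightarrow\kappa$ is a monad morphism $\tau$ with $\kappa\circ\tau_D=D\tau\circ\lambda$. *)

Set Implicit Arguments.
Unset Strict Implicit.

Record Category := {
  Obj :> Type;
  Hom : Obj -> Obj -> Type;
  idm : forall A, Hom A A;
  comp : forall A B D, Hom B D -> Hom A B -> Hom A D;
  comp_idl : forall A B (f : Hom A B), comp (idm B) f = f;
  comp_idr : forall A B (f : Hom A B), comp f (idm A) = f;
  comp_assoc : forall A B D F (h : Hom D F) (g : Hom B D) (f : Hom A B),
      comp h (comp g f) = comp (comp h g) f }.
Arguments Hom {c} _ _.
Arguments idm {c} A.
Arguments comp {c A B D} _ _.
Notation "g ∘ f" := (comp g f) (at level 40, left associativity).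

Definition is_epi (C : Category) (A B : C) (f : Hom A B) : Prop :=
  forall (Z : C) (u v : Hom B Z), u ∘ f = v ∘ f -> u = v.

Record FunData (C : Category) := {
  fo :> C -> C;
  fm : forall A B : C, Hom A B -> Hom (fo A) (fo B) }.
Arguments fm {C} f {A B} _.

Definition is_functor (C : Category) (F : FunData C) : Prop :=
  (forall A : C, fm F (idm A) = idm (F A)) /\
  (forall (A B D : C) (g : Hom B D) (f : Hom A B), fm F (g ∘ f) = fm F g ∘ fm F f).

Definition NatData (C : Category) (F G : FunData C) := forall X : C, Hom (F X) (G X).

Definition is_natural (C : Category) (F G : FunData C) (t : NatData F G) : Prop :=
  forall (A B : C) (f : Hom A B), t B ∘ fm F f = fm G f ∘ t A.

Record MonadData (C : Category) := {
  mF :> FunData C;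
  munit : forall X : C, Hom X (mF X);
  mmult : forall X : C, Hom (mF (mF X)) (mF X) }.
Arguments munit {C} m X.
Arguments mmult {C} m X.

Definition is_monad (C : Category) (M : MonadData C) : Prop :=
  is_functor M /\
  (forall (A B : C) (f : Hom A B), munit M B ∘ f = fm M f ∘ munit M A) /\
  (forall (A B : C) (f : Hom A B), mmult M B ∘ fm M (fm M f) = fm M f ∘ mmult M A) /\
  (forall X : C, mmult M X ∘ munit M (M X) = idm (M X)) /\
  (forall X : C, mmult M X ∘ fm M (munit M X) = idm (M X)) /\
  (forall X : C, mmult M X ∘ mmult M (M X) = mmult M X ∘ fm M (mmult M X)).

Record ComonadData (C : Category) := {
  cF :> FunData C;
  counit : forall X : C, Hom (cF X) X;
  comult : forall X : C, Hom (cF X) (cF (cF X)) }.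
Arguments counit {C} c X.
Arguments comult {C} c X.

Definition is_comonad (C : Category) (D : ComonadData C) : Prop :=
  is_functor D /\
  (forall (A B : C) (f : Hom A B), f ∘ counit D A = counit D B ∘ fm D f) /\
  (forall (A B : C) (f : Hom A B), comult D B ∘ fm D f = fm D (fm D f) ∘ comult D A) /\
  (forall X : C, counit D (D X) ∘ comult D X = idm (D X)) /\
  (forall X : C, fm D (counit D X) ∘ comult D X = idm (D X)) /\
  (forall X : C, comult D (D X) ∘ comult D X = fm D (comult D X) ∘ comult D X).

Definition is_monad_morphism (C : Category) (K K' : MonadData C)
    (tau : forall X : C, Hom (K X) (K' X)) : Prop :=
  (forall (A B : C) (f : Hom A B), tau B ∘ fm K f = fm K' f ∘ tau A) /\
  (forall X : C, tau X ∘ munit K X = munit K' X) /\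
  (forall X : C, tau X ∘ mmult K X = mmult K' X ∘ tau (K' X) ∘ fm K (tau X)).

Definition is_monad_iso (C : Category) (K K' : MonadData C)
    (tau : forall X : C, Hom (K X) (K' X)) : Prop :=
  is_monad_morphism tau /\
  (forall X : C, exists j : Hom (K' X) (K X), j ∘ tau X = idm (K X) /\ tau X ∘ j = idm (K' X)).

Definition is_distr_law (C : Category) (K : MonadData C) (D : ComonadData C)
    (k : forall X : C, Hom (K (D X)) (D (K X))) : Prop :=
  (forall (A B : C) (f : Hom A B), k B ∘ fm K (fm D f) = fm D (fm K f) ∘ k A) /\
  (forall X : C, k X ∘ munit K (D X) = fm D (munit K X)) /\
  (forall X : C, k X ∘ mmult K (D X) = fm D (mmult K X) ∘ k (K X) ∘ fm K (k X)) /\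
  (forall X : C, counit D (K X) ∘ k X = fm K (counit D X)) /\
  (forall X : C, comult D (K X) ∘ k X = fm D (k X) ∘ k (D X) ∘ fm K (comult D X)).

Definition is_distr_morphism (C : Category) (K K' : MonadData C) (D : ComonadData C)
    (lam : forall X : C, Hom (K (D X)) (D (K X)))
    (kap : forall X : C, Hom (K' (D X)) (D (K' X)))
    (tau : forall X : C, Hom (K X) (K' X)) : Prop :=
  is_monad_morphism tau /\
  (forall X : C, kap X ∘ tau (D X) = fm D (tau X) ∘ lam X).

Definition is_free_monad (C : Category) (Sig : FunData C) (T : MonadData C)
    (iota : NatData Sig T) : Prop :=
  is_natural iota /\
  forall (M : MonadData C), is_monad M ->
  forall (sigma : NatData Sig M), is_natural sigma ->
  exists tau : forall X : C, Hom (T X) (M X),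
    is_monad_morphism tau /\ (forall X : C, tau X ∘ iota X = sigma X) /\
    (forall tau' : forall X : C, Hom (T X) (M X),
        is_monad_morphism tau' -> (forall X : C, tau' X ∘ iota X = sigma X) ->
        forall X : C, tau' X = tau X).

Record Alg (C : Category) (T : MonadData C) := {
  acar : C;
  astr : Hom (T acar) acar }.
Arguments acar {C T} a.
Arguments astr {C T} a.

Definition is_alg (C : Category) (T : MonadData C) (A : Alg T) : Prop :=
  astr A ∘ munit T (acar A) = idm (acar A) /\
  astr A ∘ fm T (astr A) = astr A ∘ mmult T (acar A).

Definition is_alg_hom (C : Category) (T : MonadData C) (A B : Alg T)
    (h : Hom (acar A) (acar B)) : Prop :=
  h ∘ astr A = astr B ∘ fm T h.
Arguments is_alg_hom {C T} A B h.

Definition freeAlg (C : Category) (T : MonadData C) (X : C) : Alg T :=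
  {| acar := T X; astr := mmult T X |}.

Definition is_coequalizer (C : Category) (T : MonadData C) (A B : Alg T)
    (f g : Hom (acar A) (acar B)) (Q : Alg T) (s : Hom (acar B) (acar Q)) : Prop :=
  is_alg Q /\ is_alg_hom B Q s /\ s ∘ f = s ∘ g /\
  forall (Z : Alg T) (h : Hom (acar B) (acar Z)),
    is_alg Z -> is_alg_hom B Z h -> h ∘ f = h ∘ g ->
    exists u : Hom (acar Q) (acar Z),
      is_alg_hom Q Z u /\ u ∘ s = h /\
      (forall u' : Hom (acar Q) (acar Z), is_alg_hom Q Z u' -> u' ∘ s = h -> u' = u).
Arguments is_coequalizer {C T} A B f g Q s.

Definition has_coequalizers (C : Category) (T : MonadData C) : Prop :=
  forall (A B : Alg T) (f g : Hom (acar A) (acar B)),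
    is_alg A -> is_alg B -> is_alg_hom A B f -> is_alg_hom A B g ->
    exists (Q : Alg T) (s : Hom (acar B) (acar Q)), is_coequalizer A B f g Q s.

Definition is_regular_epi (C : Category) (T : MonadData C) (B Q : Alg T)
    (e : Hom (acar B) (acar Q)) : Prop :=
  exists (A : Alg T) (f g : Hom (acar A) (acar B)),
    is_alg A /\ is_alg_hom A B f /\ is_alg_hom A B g /\ is_coequalizer A B f g Q e.
Arguments is_regular_epi {C T} B Q e.

(** Standing assumption 2: U and TU send regular epis to epis. *)
Definition U_TU_regepi_epi (C : Category) (T : MonadData C) : Prop :=
  forall (B Q : Alg T) (e : Hom (acar B) (acar Q)),
    is_alg B -> is_alg Q -> is_alg_hom B Q e -> is_regular_epi B Q e ->
    is_epi e /\ is_epi (fm T e).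

(** Standing assumption 3: EU sends regular epis to epis. *)
Definition EU_regepi_epi (C : Category) (T : MonadData C) (E : FunData C) : Prop :=
  forall (B Q : Alg T) (e : Hom (acar B) (acar Q)),
    is_alg B -> is_alg Q -> is_alg_hom B Q e -> is_regular_epi B Q e ->
    is_epi (fm E e).

Definition quot_pair (C : Category) (T : MonadData C) (E : FunData C)
    (l : NatData E T) (X : C) : Hom (T (E (T X))) (T X) :=
  mmult T X ∘ mmult T (T X) ∘ fm T (l (T X)).

(** Data of the quotient monad: [Q X] = <T X / E, mu_X / E> with coequalizer
    [s X : T X -> T' X] (so q_X = s X); [Tfm] is the action on morphisms of the
    left adjoint X |-> Q X and [mu'] is U eps F'.  They are specified by the
    universal-arrow description of the left adjoint with unit
    eta'_X = q_X o eta_X. *)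
Definition is_quotient_data (C : Category) (T : MonadData C) (E : FunData C)
    (l r : NatData E T) (Q : forall X : C, Alg T)
    (s : forall X : C, Hom (T X) (acar (Q X)))
    (Tfm : forall X Y : C, Hom X Y -> Hom (acar (Q X)) (acar (Q Y)))
    (mu' : forall X : C, Hom (acar (Q (acar (Q X)))) (acar (Q X))) : Prop :=
  (forall X : C, is_coequalizer (freeAlg T (E (T X))) (freeAlg T X)
                   (quot_pair l X) (quot_pair r X) (Q X) (s X)) /\
  (forall (X Y : C) (f : Hom X Y),
      is_alg_hom (Q X) (Q Y) (Tfm X Y f) /\
      Tfm X Y f ∘ (s X ∘ munit T X) = (s Y ∘ munit T Y) ∘ f) /\
  (forall X : C,
      is_alg_hom (Q (acar (Q X))) (Q X) (mu' X) /\
      mu' X ∘ (s (acar (Q X)) ∘ munit T (acar (Q X))) = idm (acar (Q X))).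

Definition quotMonad (C : Category) (T : MonadData C) (Q : forall X : C, Alg T)
    (s : forall X : C, Hom (T X) (acar (Q X)))
    (Tfm : forall X Y : C, Hom X Y -> Hom (acar (Q X)) (acar (Q Y)))
    (mu' : forall X : C, Hom (acar (Q (acar (Q X)))) (acar (Q X))) : MonadData C :=
  {| mF := {| fo := fun X => acar (Q X); fm := Tfm |};
     munit := fun X => s X ∘ munit T X;
     mmult := mu' |}.

Definition preserves_eqs (C : Category) (T : MonadData C) (E : FunData C)
    (l r : NatData E T) (D : ComonadData C) (T'obj : C -> C)
    (q : forall X : C, Hom (T X) (T'obj X))
    (lam : forall X : C, Hom (T (D X)) (D (T X))) : Prop :=
  forall X : C, fm D (q X) ∘ lam X ∘ l (D X) = fm D (q X) ∘ lam X ∘ r (D X).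

Arguments is_quotient_data {C T E} l r Q s Tfm mu'.
Arguments quotMonad {C T} Q s Tfm mu'.
Arguments preserves_eqs {C T E} l r D T'obj q lam.
Arguments is_distr_law {C} K D k.
Arguments is_distr_morphism {C K K'} D lam kap tau.
Arguments is_monad_iso {C K K'} tau.
Arguments is_monad_morphism {C K K'} tau.
Arguments is_free_monad {C Sig T} iota.

From Stdlib Require Import Setoid IndefiniteDescription.

(* The distributive law lam lifts D to T-algebras, sending (A, a) to
   (D A, D a ∘ lam_A).  The quotient T'X is the coequalizer of the free
   algebra T X by the equations, and lam preserves the equations exactly when
   each lifted algebra D (T'X) satisfies them; then D q_X ∘ lam_X factors
   through the coequalizer q_(D X), which defines lam'.  Since q_X and T q_X
   are epi, the axioms of a distributive law for lam' (and its uniqueness)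
   follow from those for lam by cancellation.  For (b), the law lam' is
   transported along the monad isomorphism i. *)

Lemma comp_postcomp {C : Category} {A B : C} {f g : Hom A B} :
  f = g -> forall (W : C) (z : Hom W A), f ∘ z = g ∘ z.
Proof. intros ->; reflexivity. Qed.

Ltac assoc_r := repeat rewrite <- comp_assoc.

Ltac postcomp_of H H' :=
  first [ pose proof (fun a b c d => comp_postcomp (H a b c d)) as H'
        | pose proof (fun a b c => comp_postcomp (H a b c)) as H'
        | pose proof (fun a b => comp_postcomp (H a b)) as H'
        | pose proof (fun a => comp_postcomp (H a)) as H'
        | pose proof (comp_postcomp H) as H' ];
  repeat setoid_rewrite <- comp_assoc in H'.

(* [rewrite_c H] rewrites with an equation between composites modulo
   associativity: in a right-nested goal, the left-hand side of [H] may also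
   occur as a prefix of a longer composite. *)
Ltac rewrite_c_by rw H :=
  let H0 := fresh in let H1 := fresh in
  assoc_r; pose proof H as H0; repeat setoid_rewrite <- comp_assoc in H0;
  first [ rw H0 | postcomp_of H0 H1; rw H1; clear H1 ]; clear H0.

Tactic Notation "rewrite_c" constr(H) := rewrite_c_by ltac:(fun h => rewrite h) H.
Tactic Notation "rewrite_c" "<-" constr(H) := rewrite_c_by ltac:(fun h => rewrite <- h) H.

Lemma epi_comp {C : Category} {A B Z : C} {f : Hom A B} {g : Hom B Z} :
  is_epi f -> is_epi g -> is_epi (g ∘ f).
Proof.
  intros Hf Hg W u v H. apply Hg, Hf. rewrite <- !comp_assoc. exact H.
Qed.

Lemma retraction_epi {C : Category} {A B : C} {f : Hom A B} (j : Hom B A) :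
  f ∘ j = idm B -> is_epi f.
Proof.
  intros Hfj Z u v H.
  rewrite <- (comp_idr u), <- (comp_idr v), <- Hfj, !comp_assoc, H. reflexivity.
Qed.

Lemma fm_comp_eq {C : Category} {F : FunData C} {A B B' Z : C}
    {a : Hom B Z} {b : Hom A B} {c : Hom B' Z} {d : Hom A B'} :
  is_functor F -> a ∘ b = c ∘ d -> fm F a ∘ fm F b = fm F c ∘ fm F d.
Proof. intros [_ Fc] H. rewrite <- !Fc, H. reflexivity. Qed.

Lemma monad_morphism_comp {C : Category} {K1 K2 K3 : MonadData C}
    {a : forall X : C, Hom (K1 X) (K2 X)} {b : forall X : C, Hom (K2 X) (K3 X)} :
  is_functor K1 -> is_monad_morphism a -> is_monad_morphism b ->
  is_monad_morphism (K := K1) (K' := K3) (fun X => b X ∘ a X).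
Proof.
  intros [_ K1c] [anat [aunit amult]] [bnat [bunit bmult]]. split; [|split].
  - intros A B f. assoc_r. rewrite anat. rewrite_c bnat. reflexivity.
  - intros X. assoc_r. rewrite aunit, bunit. reflexivity.
  - intros X. assoc_r. rewrite amult. rewrite_c bmult. rewrite K1c.
    rewrite_c <- (anat _ _ (b X)). reflexivity.
Qed.

Lemma monad_iso_epi {C : Category} {K K' : MonadData C}
    {i : forall X : C, Hom (K X) (K' X)} :
  is_monad_iso i -> forall X, is_epi (i X).
Proof. intros [_ Hinv] X. destruct (Hinv X) as [j [_ Hij]]. exact (retraction_epi j Hij). Qed.

Lemma monad_iso_fm_epi {C : Category} {F : FunData C} {K K' : MonadData C}
    {i : forall X : C, Hom (K X) (K' X)} :
  is_functor F -> is_monad_iso i -> forall X, is_epi (fm F (i X)).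
Proof.
  intros [Fid Fc] [_ Hinv] X. destruct (Hinv X) as [j [_ Hij]].
  apply (retraction_epi (fm F j)). rewrite <- Fc, Hij. apply Fid.
Qed.

Section DistributiveLaws.
Context {C : Category} {T K : MonadData C} {D : ComonadData C}.

Lemma distr_morphism_unique {lam : forall X : C, Hom (T (D X)) (D (T X))}
    {k1 k2 : forall X : C, Hom (K (D X)) (D (K X))} {t : forall X : C, Hom (T X) (K X)} :
  (forall X, is_epi (t X)) -> is_distr_morphism D lam k1 t -> is_distr_morphism D lam k2 t ->
  forall X, k1 X = k2 X.
Proof. intros Hepi [_ H1] [_ H2] X. apply (Hepi (D X)). rewrite H1, H2. reflexivity. Qed.

(* Each law for [kap] is checked after precomposition with an epi built from
   [t], where it becomes the corresponding law for [lam]. *)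
Lemma distr_law_transfer {lam : forall X : C, Hom (T (D X)) (D (T X))}
    {kap : forall X : C, Hom (K (D X)) (D (K X))} {t : forall X : C, Hom (T X) (K X)} :
  is_functor T -> is_comonad D -> is_distr_law T D lam -> is_monad_morphism t ->
  (forall X, is_epi (t X)) -> (forall X, is_epi (fm T (t X))) ->
  (forall X, kap X ∘ t (D X) = fm D (t X) ∘ lam X) ->
  is_distr_law K D kap.
Proof.
  intros [_ Tc] HD [lnat [lunit [lmult [lcounit lcomult]]]] [tnat [tunit tmult]]
    Hepi HTepi Hkap.
  destruct HD as [HDf [counit_nat [comult_nat _]]].
  pose proof HDf as [_ Dc].
  split; [|split; [|split; [|split]]].
  - intros A B f. apply (Hepi (D A)). assoc_r.
    rewrite_c <- tnat. repeat rewrite_c Hkap. rewrite_c lnat.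
    rewrite_c (fm_comp_eq HDf (tnat A B f)). reflexivity.
  - intros X. rewrite <- (tunit (D X)), <- (tunit X), Dc. assoc_r.
    rewrite_c Hkap. rewrite lunit. reflexivity.
  - intros X. apply (epi_comp (HTepi (D X)) (Hepi (K (D X)))). assoc_r.
    rewrite_c <- tmult. rewrite_c <- tnat. rewrite <- Tc. repeat rewrite_c Hkap.
    rewrite Tc. rewrite_c lmult. rewrite_c lnat.
    assert (Dtmult : fm D (t X) ∘ fm D (mmult T X)
                     = fm D (mmult K X) ∘ fm D (t (K X)) ∘ fm D (fm T (t X)))
      by (rewrite <- !Dc, tmult; reflexivity).
    rewrite_c Dtmult. reflexivity.
  - intros X. apply (Hepi (D X)). assoc_r.
    rewrite Hkap. rewrite_c <- counit_nat. rewrite lcounit, tnat. reflexivity.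
  - intros X. apply (Hepi (D X)). assoc_r.
    rewrite <- tnat. repeat rewrite_c Hkap. rewrite_c comult_nat. rewrite_c lcomult.
    rewrite_c (fm_comp_eq HDf (Hkap X)). reflexivity.
Qed.

Lemma distr_law_transport_iso {K' : MonadData C}
    {lam : forall X : C, Hom (T (D X)) (D (T X))}
    {lam' : forall X : C, Hom (K' (D X)) (D (K' X))} {t : forall X : C, Hom (T X) (K' X)}
    {i : forall X : C, Hom (K' X) (K X)} :
  is_functor T -> is_comonad D -> is_distr_law T D lam ->
  (forall X, is_epi (t X)) -> (forall X, is_epi (fm T (t X))) ->
  is_distr_morphism D lam lam' t -> is_monad_iso i ->
  exists kap : forall X : C, Hom (K (D X)) (D (K X)),
    is_distr_law K D kap /\ is_distr_morphism D lam kap (fun X => i X ∘ t X).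
Proof.
  intros HT HD Hlam Hepi HTepi [Ht Hlam'] Hi.
  assert (Hinv : forall X, {j : Hom (K X) (K' X) | j ∘ i X = idm (K' X)}).
  { intros X. apply constructive_indefinite_description.
    destruct (proj2 Hi X) as [j [Hji _]]. exists j. exact Hji. }
  pose proof HD as [[_ Dc] _].
  set (kap := fun X => fm D (i X) ∘ lam' X ∘ proj1_sig (Hinv (D X))).
  assert (Hkap : forall X, kap X ∘ (i (D X) ∘ t (D X)) = fm D (i X ∘ t X) ∘ lam X).
  { intros X. unfold kap. destruct (Hinv (D X)) as [j Hji]. simpl.
    assoc_r. rewrite_c Hji. rewrite comp_idl, Hlam', Dc, comp_assoc. reflexivity. }
  assert (Hit : is_monad_morphism (K := T) (K' := K) (fun X => i X ∘ t X))
    by exact (monad_morphism_comp HT Ht (proj1 Hi)).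
  exists kap. split; [|split; [exact Hit | exact Hkap]].
  apply (distr_law_transfer HT HD Hlam Hit).
  - intros X. exact (epi_comp (Hepi X) (monad_iso_epi Hi X)).
  - intros X. rewrite (proj2 HT).
    exact (epi_comp (HTepi X) (monad_iso_fm_epi HT Hi X)).
  - exact Hkap.
Qed.

End DistributiveLaws.

Section Algebras.
Context {C : Category} {T : MonadData C}.

Definition satisfies_eqs {E : FunData C} (l r : NatData E T) (B : Alg T) : Prop :=
  astr B ∘ l (acar B) = astr B ∘ r (acar B).

Lemma alg_hom_comp {A B Z : Alg T} {g : Hom (acar A) (acar B)} {h : Hom (acar B) (acar Z)} :
  is_functor T -> is_alg_hom A B g -> is_alg_hom B Z h -> is_alg_hom A Z (h ∘ g).
Proof.
  intros [_ Tc] Hg Hh. unfold is_alg_hom in *.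
  rewrite Tc. rewrite_c Hg. rewrite_c Hh. reflexivity.
Qed.

Hypothesis HT : is_monad T.

Lemma free_alg_is_alg (X : C) : is_alg (freeAlg T X).
Proof.
  destruct HT as [_ [_ [_ [munit_l [_ massoc]]]]].
  split; [apply munit_l | symmetry; apply massoc].
Qed.

Lemma fm_free_alg_hom {X Y : C} (f : Hom X Y) :
  is_alg_hom (freeAlg T X) (freeAlg T Y) (fm T f).
Proof. destruct HT as [_ [_ [mnat _]]]. symmetry. apply mnat. Qed.

Lemma mmult_free_alg_hom (X : C) : is_alg_hom (freeAlg T (T X)) (freeAlg T X) (mmult T X).
Proof. destruct HT as [_ [_ [_ [_ [_ massoc]]]]]. apply massoc. Qed.

Lemma astr_alg_hom {A : Alg T} : is_alg A -> is_alg_hom (freeAlg T (acar A)) A (astr A).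
Proof. intros [_ Hassoc]. symmetry. exact Hassoc. Qed.

Lemma free_alg_hom_ext {X : C} {Z : Alg T} {h1 h2 : Hom (T X) (acar Z)} :
  is_alg_hom (freeAlg T X) Z h1 -> is_alg_hom (freeAlg T X) Z h2 ->
  h1 ∘ munit T X = h2 ∘ munit T X -> h1 = h2.
Proof.
  destruct HT as [[_ Tc] [_ [_ [_ [munit_r _]]]]].
  assert (Hext : forall h : Hom (T X) (acar Z),
             is_alg_hom (freeAlg T X) Z h -> h = astr Z ∘ fm T (h ∘ munit T X)).
  { intros h Hh. rewrite Tc, comp_assoc, <- Hh. simpl.
    rewrite <- comp_assoc, munit_r, comp_idr. reflexivity. }
  intros H1 H2 Hunit. rewrite (Hext h1 H1), (Hext h2 H2), Hunit. reflexivity.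
Qed.

Lemma quot_pair_alg_hom {E : FunData C} (l : NatData E T) (X : C) :
  is_alg_hom (freeAlg T (E (T X))) (freeAlg T X) (quot_pair l X).
Proof.
  exact (alg_hom_comp (proj1 HT) (fm_free_alg_hom (l (T X)))
           (alg_hom_comp (proj1 HT) (mmult_free_alg_hom (T X)) (mmult_free_alg_hom X))).
Qed.

Lemma quot_pair_unit {E : FunData C} {l : NatData E T} (X : C) :
  is_natural l -> quot_pair l X ∘ (munit T (E (T X)) ∘ fm E (munit T X)) = l X.
Proof.
  destruct HT as [_ [munit_nat [_ [munit_l [munit_r _]]]]]. intros Hl.
  unfold quot_pair. rewrite_c <- munit_nat. rewrite_c munit_l. rewrite comp_idl.
  rewrite Hl. rewrite_c munit_r. apply comp_idl.
Qed.

Lemma alg_hom_quot_pair {E : FunData C} {n : NatData E T} {Y : C} {B : Alg T}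
    {h : Hom (T Y) (acar B)} :
  is_natural n -> is_alg B -> is_alg_hom (freeAlg T Y) B h ->
  h ∘ quot_pair n Y = astr B ∘ fm T (astr B ∘ n (acar B) ∘ fm E h).
Proof.
  destruct HT as [[_ Tc] [_ [mnat _]]]. intros Hn [_ HBassoc] Hh.
  unfold is_alg_hom in Hh; simpl in Hh. unfold quot_pair.
  rewrite_c Hh. rewrite_c <- mnat. rewrite_c <- HBassoc. rewrite Hn, !Tc. reflexivity.
Qed.

Lemma satisfies_eqs_coequalizes {E : FunData C} {l r : NatData E T} {Y : C} {B : Alg T}
    {h : Hom (T Y) (acar B)} :
  is_natural l -> is_natural r -> is_alg B -> satisfies_eqs l r B ->
  is_alg_hom (freeAlg T Y) B h -> h ∘ quot_pair l Y = h ∘ quot_pair r Y.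
Proof.
  intros Hl Hr HB Hsat Hh.
  rewrite (alg_hom_quot_pair Hl HB Hh), (alg_hom_quot_pair Hr HB Hh), Hsat. reflexivity.
Qed.

End Algebras.

Section Lifting.
Context {C : Category} {T : MonadData C} {D : ComonadData C}
  {lam : forall X : C, Hom (T (D X)) (D (T X))}.
Hypotheses (HT : is_functor T) (HD : is_functor D) (Hlam : is_distr_law T D lam).

Definition lift_alg (A : Alg T) : Alg T :=
  {| acar := D (acar A); astr := fm D (astr A) ∘ lam (acar A) |}.

Lemma lift_alg_is_alg {A : Alg T} : is_alg A -> is_alg (lift_alg A).
Proof.
  destruct HT as [_ Tc]. destruct HD as [Did Dc].
  destruct Hlam as [lnat [lunit [lmult _]]]. intros [Hunit Hassoc].
  split; simpl.
  - rewrite_c lunit. rewrite <- Dc, Hunit. apply Did.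
  - rewrite Tc. rewrite_c lnat. rewrite_c (fm_comp_eq HD Hassoc). rewrite_c lmult.
    reflexivity.
Qed.

Lemma lift_alg_hom {A B : Alg T} {h : Hom (acar A) (acar B)} :
  is_alg_hom A B h -> is_alg_hom (lift_alg A) (lift_alg B) (fm D h).
Proof.
  destruct Hlam as [lnat _]. intros Hh. unfold is_alg_hom; simpl.
  rewrite_c (fm_comp_eq HD Hh). rewrite_c lnat. reflexivity.
Qed.

Lemma distr_free_alg_hom (X : C) :
  is_alg_hom (freeAlg T (D X)) (lift_alg (freeAlg T X)) (lam X).
Proof.
  destruct Hlam as [_ [_ [lmult _]]]. apply lmult.
Qed.

End Lifting.

Arguments lift_alg {C T D} lam A.

Section QuotientMonad.
Context {C : Category} {T : MonadData C} {E : FunData C} {l r : NatData E T}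
  {Q : forall X : C, Alg T} {s : forall X : C, Hom (T X) (acar (Q X))}
  {Tfm : forall X Y : C, Hom X Y -> Hom (acar (Q X)) (acar (Q Y))}
  {mu' : forall X : C, Hom (acar (Q (acar (Q X)))) (acar (Q X))}.
Hypotheses (HT : is_monad T) (Hl : is_natural l) (Hr : is_natural r)
  (Hq : is_quotient_data l r Q s Tfm mu').

Lemma quot_coequalizer (X : C) :
  is_coequalizer (freeAlg T (E (T X))) (freeAlg T X)
    (quot_pair l X) (quot_pair r X) (Q X) (s X).
Proof. exact (proj1 Hq X). Qed.

Lemma quot_is_alg (X : C) : is_alg (Q X).
Proof. exact (proj1 (quot_coequalizer X)). Qed.

Lemma quot_alg_hom (X : C) : is_alg_hom (freeAlg T X) (Q X) (s X).
Proof. exact (proj1 (proj2 (quot_coequalizer X))). Qed.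

Lemma quot_epi : U_TU_regepi_epi T -> forall X, is_epi (s X) /\ is_epi (fm T (s X)).
Proof.
  intros HU X.
  apply (HU (freeAlg T X) (Q X));
    [apply (free_alg_is_alg HT) | apply quot_is_alg | apply quot_alg_hom |].
  exists (freeAlg T (E (T X))), (quot_pair l X), (quot_pair r X).
  split; [apply (free_alg_is_alg HT) |].
  split; [apply (quot_pair_alg_hom HT) |].
  split; [apply (quot_pair_alg_hom HT) | apply quot_coequalizer].
Qed.

Lemma quot_natural {X Y : C} (f : Hom X Y) : Tfm X Y f ∘ s X = s Y ∘ fm T f.
Proof.
  destruct (proj1 (proj2 Hq) X Y f) as [HTfm HTfm_unit].
  apply (free_alg_hom_ext HT).
  - exact (alg_hom_comp (proj1 HT) (quot_alg_hom X) HTfm).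
  - exact (alg_hom_comp (proj1 HT) (fm_free_alg_hom HT f) (quot_alg_hom Y)).
  - destruct HT as [_ [munit_nat _]].
    rewrite <- comp_assoc, HTfm_unit. rewrite_c <- munit_nat. reflexivity.
Qed.

(* Both sides are algebra maps out of the free algebra on [Q X] that are
   retractions of its unit. *)
Lemma quot_action (X : C) : astr (Q X) = mu' X ∘ s (acar (Q X)).
Proof.
  destruct (proj2 (proj2 Hq) X) as [Hmu' Hmu'_unit].
  apply (free_alg_hom_ext HT).
  - exact (astr_alg_hom (quot_is_alg X)).
  - exact (alg_hom_comp (proj1 HT) (quot_alg_hom (acar (Q X))) Hmu').
  - rewrite (proj1 (quot_is_alg X)), <- comp_assoc, Hmu'_unit. reflexivity.
Qed.

Lemma quot_monad_morphism : is_monad_morphism (K := T) (K' := quotMonad Q s Tfm mu') s.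
Proof.
  split; [|split].
  - intros A B f. symmetry. apply quot_natural.
  - intros X. reflexivity.
  - intros X. simpl. rewrite <- quot_action. apply quot_alg_hom.
Qed.

Lemma quot_coequalizes_eqs (X : C) : s X ∘ l X = s X ∘ r X.
Proof.
  destruct (quot_coequalizer X) as [_ [_ [Hcoeq _]]].
  rewrite <- (quot_pair_unit HT X Hl), <- (quot_pair_unit HT X Hr), !comp_assoc.
  simpl in Hcoeq. rewrite Hcoeq. reflexivity.
Qed.

Lemma distr_morphism_preserves_eqs {D : ComonadData C}
    {lam : forall X : C, Hom (T (D X)) (D (T X))}
    {lam' : forall X : C, Hom (acar (Q (D X))) (D (acar (Q X)))} :
  is_distr_morphism (K := T) (K' := quotMonad Q s Tfm mu') D lam lam' s ->
  preserves_eqs l r D (fun X => acar (Q X)) s lam.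
Proof.
  intros [_ Hlam'] X. simpl in Hlam'.
  rewrite <- Hlam'. assoc_r. rewrite quot_coequalizes_eqs. reflexivity.
Qed.

Section Preservation.
Context {D : ComonadData C} {lam : forall X : C, Hom (T (D X)) (D (T X))}.
Hypotheses (HD : is_comonad D) (Hlam : is_distr_law T D lam)
  (Hpres : preserves_eqs l r D (fun X => acar (Q X)) s lam).

Lemma preserves_eqs_lift_satisfies (X : C) : satisfies_eqs l r (lift_alg lam (Q X)).
Proof.
  destruct HD as [[_ Dc] _]. unfold satisfies_eqs; simpl.
  rewrite quot_action, Dc. assoc_r. rewrite_c (Hpres (acar (Q X))). reflexivity.
Qed.

(* [D (s X) ∘ lam X] is an algebra map into the lifted algebra on [Q X],
   which satisfies the equations, so it factors through the coequalizer. *)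
Lemma preserves_eqs_factor (X : C) :
  exists u : Hom (acar (Q (D X))) (D (acar (Q X))), u ∘ s (D X) = fm D (s X) ∘ lam X.
Proof.
  assert (HDf : is_functor D) by exact (proj1 HD).
  assert (Hlift : is_alg (lift_alg lam (Q X)))
    by exact (lift_alg_is_alg (proj1 HT) HDf Hlam (quot_is_alg X)).
  assert (Hh : is_alg_hom (freeAlg T (D X)) (lift_alg lam (Q X)) (fm D (s X) ∘ lam X))
    by exact (alg_hom_comp (proj1 HT) (distr_free_alg_hom Hlam X)
                (lift_alg_hom HDf Hlam (quot_alg_hom X))).
  destruct (quot_coequalizer (D X)) as [_ [_ [_ Huniv]]].
  destruct (Huniv _ _ Hlift Hh) as [u [_ [Hu _]]].
  - exact (satisfies_eqs_coequalizes HT Hl Hr Hlift (preserves_eqs_lift_satisfies X) Hh).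
  - exists u. exact Hu.
Qed.

Lemma preserves_eqs_distr_law (HU : U_TU_regepi_epi T) :
  exists lam' : forall X : C, Hom (acar (Q (D X))) (D (acar (Q X))),
    is_distr_law (quotMonad Q s Tfm mu') D lam' /\
    is_distr_morphism (K := T) (K' := quotMonad Q s Tfm mu') D lam lam' s.
Proof.
  assert (Hfactor : forall X, {u : Hom (acar (Q (D X))) (D (acar (Q X))) |
                                u ∘ s (D X) = fm D (s X) ∘ lam X})
    by (intros X; apply constructive_indefinite_description, preserves_eqs_factor).
  exists (fun X => proj1_sig (Hfactor X)).
  assert (Hlam' : forall X, proj1_sig (Hfactor X) ∘ s (D X) = fm D (s X) ∘ lam X)
    by (intros X; exact (proj2_sig (Hfactor X))).
  split; [| exact (conj quot_monad_morphism Hlam')].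
  apply (distr_law_transfer (proj1 HT) HD Hlam quot_monad_morphism); [| | exact Hlam'];
    intros X; apply (quot_epi HU).
Qed.

End Preservation.
End QuotientMonad.

Theorem proposition4p12 (C : Category) (Sig : FunData C) (T : MonadData C)
  (iota : NatData Sig T) (E : FunData C) (l r : NatData E T)
  (Q : forall X : C, Alg T) (s : forall X : C, Hom (T X) (acar (Q X)))
  (Tfm : forall X Y : C, Hom X Y -> Hom (acar (Q X)) (acar (Q Y)))
  (mu' : forall X : C, Hom (acar (Q (acar (Q X)))) (acar (Q X)))
  (D : ComonadData C) (lam : forall X : C, Hom (T (D X)) (D (T X))) :
  is_functor Sig -> is_monad T -> is_free_monad iota ->
  is_functor E -> is_natural l -> is_natural r ->
  has_coequalizers T -> U_TU_regepi_epi T -> EU_regepi_epi T E ->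
  is_quotient_data l r Q s Tfm mu' ->
  is_comonad D -> is_distr_law T D lam ->
  (* (a) *)
  ((preserves_eqs l r D (fun X => acar (Q X)) s lam <->
      exists lam' : forall X : C, Hom (acar (Q (D X))) (D (acar (Q X))),
        is_distr_law (quotMonad Q s Tfm mu') D lam' /\
        is_distr_morphism (K := T) (K' := quotMonad Q s Tfm mu') D lam lam' s) /\
   (forall lam1 lam2 : forall X : C, Hom (acar (Q (D X))) (D (acar (Q X))),
        is_distr_law (quotMonad Q s Tfm mu') D lam1 ->
        is_distr_morphism (K := T) (K' := quotMonad Q s Tfm mu') D lam lam1 s ->
        is_distr_law (quotMonad Q s Tfm mu') D lam2 ->
        is_distr_morphism (K := T) (K' := quotMonad Q s Tfm mu') D lam lam2 s ->
        forall X : C, lam1 X = lam2 X)) /\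
  (* (b) *)
  (preserves_eqs l r D (fun X => acar (Q X)) s lam ->
   forall (K : MonadData C) (i : forall X : C, Hom (acar (Q X)) (K X)),
     is_monad K -> is_monad_iso (K := quotMonad Q s Tfm mu') (K' := K) i ->
     exists kap : forall X : C, Hom (K (D X)) (D (K X)),
       is_distr_law K D kap /\
       is_distr_morphism (K := T) (K' := K) D lam kap (fun X => i X ∘ s X) /\
       (forall kap' : forall X : C, Hom (K (D X)) (D (K X)),
          is_distr_law K D kap' ->
          is_distr_morphism (K := T) (K' := K) D lam kap' (fun X => i X ∘ s X) ->
          forall X : C, kap' X = kap X)).
Proof.
  intros _ HT _ _ Hl Hr _ HU _ Hq HD Hlam.
  set (T' := quotMonad Q s Tfm mu').
  assert (Hepi : forall X, is_epi (s X)) by (intros X; apply (quot_epi HT Hq HU)).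
  split; [split; [split|] |].
  - intros Hpres. exact (preserves_eqs_distr_law HT Hl Hr Hq HD Hlam Hpres HU).
  - intros [lam' [_ Hmor]]. exact (distr_morphism_preserves_eqs HT Hl Hr Hq Hmor).
  - intros lam1 lam2 _ H1 _ H2. exact (distr_morphism_unique (K := T') Hepi H1 H2).
  - intros Hpres K i _ Hi.
    destruct (preserves_eqs_distr_law HT Hl Hr Hq HD Hlam Hpres HU) as [lam' [_ Hmor]].
    destruct (distr_law_transport_iso (K' := T') (proj1 HT) HD Hlam Hepi
                (fun X => proj2 (quot_epi HT Hq HU X)) Hmor Hi) as [kap [Hkap Hkmor]].
    assert (Hepi_is : forall X, is_epi (i X ∘ s X))
      by (intros X; exact (epi_comp (Hepi X) (monad_iso_epi Hi X))).
    exists kap. split; [exact Hkap | split; [exact Hkmor |]].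
    intros kap' _ Hkmor'. exact (distr_morphism_unique Hepi_is Hkmor' Hkmor).
Qed.
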